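(* Let $H$ be a complex Hilbert space, let $P \in \mathcal{L}(H)$ be a positive operator (i.e. $\langle Px,x\rangle \ge 0$ for all $x\in H$), and let $(p_n)$ be a sequence of polynomials with positive coefficients such that $p_n(P) \to S$ in the operator norm of $\mathcal{L}(H)$, for some $S \in \mathcal{L}(H)$. If $P$ satisfies the property $\mathcal{N}$, then $S$ satisfies the property $\mathcal{N}$.
   Context: $\mathcal{L}(H)$ is the Banach algebra of bounded linear operators on $H$ with the operator norm; for a polynomial $p(t) = \sum_{k=0}^m \alpha_k t^k$, $p(P) = \sum_{k=0}^m \alpha_k P^k$ with $P^0 = I$. An operator $T \in \mathcal{L}(H)$ satisfies the property $\mathcal{N}$ if there exists $x_0 \in H$ with $\|x_0\|=1$ and $\|Tx_0\| = \|T\|$. *)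

From HB Require Import structures.
From mathcomp Require Import all_boot all_order all_algebra.
From mathcomp Require Import complex.
From mathcomp Require Import all_classical all_reals.
Set Implicit Arguments. Unset Strict Implicit. Unset Printing Implicit Defensive.
Import Order.TTheory GRing.Theory Num.Theory.
Local Open Scope ring_scope.
Local Open Scope classical_set_scope.

Definition ip_norm (R : realType) (H : lmodType R[i]) (ip : H -> H -> R[i])
  (x : H) : R := Num.sqrt (complex.Re (ip x x)).

Record hilbert (R : realType) (H : lmodType R[i]) := Hilbert {
  inner : H -> H -> R[i];
  innerDZl : forall (a : R[i]) (x y z : H),
      inner (a *: x + y) z = a * inner x z + inner y z;
  inner_conj : forall x y : H, inner y x = Num.conj (inner x y);
  inner_ge0 : forall x : H, 0 <= inner x x;
  inner_eq0 : forall x : H, inner x x = 0 -> x = 0;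
  inner_complete : forall u : nat -> H,
      (forall e : R, 0 < e -> exists N : nat, forall m n : nat,
          (N <= m)%N -> (N <= n)%N -> ip_norm inner (u m - u n) < e) ->
      exists l : H, forall e : R, 0 < e -> exists N : nat, forall n : nat,
          (N <= n)%N -> ip_norm inner (u n - l) < e
}.

Section Ops.
Variables (R : realType) (H : lmodType R[i]) (hs : hilbert H).

Definition hnorm (x : H) : R := ip_norm (inner hs) x.

Definition bounded_linear (T : H -> H) : Prop :=
  (forall (a : R[i]) (x y : H), T (a *: x + y) = a *: T x + T y) /\
  exists M : R, forall x : H, hnorm (T x) <= M * hnorm x.

Definition opnorm (T : H -> H) : R :=
  sup [set hnorm (T x) | x in [set x : H | hnorm x <= 1]].

Definition property_N (T : H -> H) : Prop :=
  exists x0 : H, hnorm x0 = 1 /\ hnorm (T x0) = opnorm T.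

Definition positive_op (P : H -> H) : Prop :=
  forall x : H, 0 <= inner hs (P x) x.

Definition poly_op (p : {poly R[i]}) (T : H -> H) : H -> H :=
  fun x => \sum_(k < size p) p`_k *: iter k T x.
End Ops.

From Pilot Require Import Defs.
From HB Require Import structures.
From mathcomp Require Import all_boot all_order all_algebra.
From mathcomp Require Import complex.
From mathcomp Require Import all_classical all_reals.
From mathcomp Require Import ring lra.
Import Order.TTheory GRing.Theory Num.Theory.
Local Open Scope ring_scope.

Local Notation "t %:C" := (real_complex _ t) : ring_scope.
Local Notation Re := complex.Re.

(* A positive operator P is self-adjoint; if it attains its norm l at a unit
   vector x0, then Re <P^2 x0, x0> = |P x0|^2 = l^2 forces P^2 x0 = l^2 x0,
   and positivity rules out the eigenvalue -l for P x0 - l x0, so that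
   P x0 = l x0.  For p with nonnegative coefficients, |p(P) x| <= p(l) |x|
   with equality at x0, so every p_n(P) attains its norm at the same unit
   vector x0, and this property passes to the norm limit S. *)

Lemma sqr_le_of_quadratic_ge0 (F : realFieldType) (a b c : F) :
  0 <= c -> (forall t, 0 <= a + 2 * t * b + t ^+ 2 * c) -> b ^+ 2 <= a * c.
Proof.
move=> c_ge0; have [->|c_neq0] := eqVneq c 0 => quad_ge0.
  have [->|b_neq0] := eqVneq b 0; first by rewrite expr0n mulr0.
  have := quad_ge0 (- (a + 1) / (2 * b)); set t := - (a + 1) / (2 * b).
  have -> : a + 2 * t * b + t ^+ 2 * 0 = -1 by rewrite /t; field.
  by move=> ?; lra.
have c_gt0 : 0 < c by rewrite lt_def c_neq0.
have := quad_ge0 (- b / c); set t := - b / c.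
have -> : a + 2 * t * b + t ^+ 2 * c = (a * c - b ^+ 2) / c.
  by rewrite /t; field.
by rewrite pmulr_lge0 ?invr_gt0 // subr_ge0.
Qed.

Section InnerProductSpace.
Context {R : realType} {H : lmodType R[i]} (hs : hilbert H).
Local Notation inner := (inner hs).
Local Notation hnorm := (hnorm hs).
Local Notation opnorm := (opnorm hs).

Lemma inner0l z : inner 0 z = 0.
Proof.
have := innerDZl hs 1 0 0 z; rewrite scale1r addr0 mul1r.
by rewrite -{1}[inner 0 z]addr0 => /addrI <-.
Qed.

Lemma innerDl x y z : inner (x + y) z = inner x z + inner y z.
Proof. by have := innerDZl hs 1 x y z; rewrite scale1r mul1r. Qed.

Lemma innerZl a x z : inner (a *: x) z = a * inner x z.
Proof. by have := innerDZl hs a x 0 z; rewrite !addr0 inner0l addr0. Qed.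

Lemma innerDZr a z x y : inner z (a *: x + y) = a^* * inner z x + inner z y.
Proof.
by rewrite inner_conj innerDZl rmorphD rmorphM /= -!inner_conj.
Qed.

Lemma innerDr z x y : inner z (x + y) = inner z x + inner z y.
Proof. by have := innerDZr 1 z x y; rewrite scale1r conjC1 mul1r. Qed.

Lemma innerZr z a x : inner z (a *: x) = a^* * inner z x.
Proof. by rewrite inner_conj innerZl rmorphM /= -inner_conj. Qed.

Lemma inner_self_real x : inner x x = (Re (inner x x))%:C.
Proof. by rewrite RRe_real // ger0_real // inner_ge0. Qed.

Lemma hnorm_ge0 x : 0 <= hnorm x.
Proof. exact: sqrtr_ge0. Qed.

Lemma hnorm_sqr x : hnorm x ^+ 2 = Re (inner x x).
Proof. by rewrite sqr_sqrtr // -ler0c -inner_self_real inner_ge0. Qed.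

Lemma hnorm_eq0 {x : H} : hnorm x = 0 -> x = 0.
Proof.
move=> x0; apply: (@inner_eq0 _ _ hs).
by rewrite inner_self_real -hnorm_sqr x0 expr0n.
Qed.

Lemma hnorm0 : hnorm 0 = 0.
Proof. by rewrite /Defs.hnorm /ip_norm inner0l sqrtr0. Qed.

Lemma hnorm_sqrDZ x y (t : R) :
  hnorm (x + t%:C *: y) ^+ 2 =
  hnorm x ^+ 2 + 2 * t * Re (inner x y) + t ^+ 2 * hnorm y ^+ 2.
Proof.
rewrite !hnorm_sqr !(innerDl, innerDr, innerZl, innerZr).
rewrite [inner y x]inner_conj.
move: (inner x y) (inner x x) (inner y y) => [b1 b2] [a1 a2] [c1 c2] /=.
ring.
Qed.

Lemma Re_inner_le x y : Re (inner x y) <= hnorm x * hnorm y.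
Proof.
have CS : Re (inner x y) ^+ 2 <= hnorm x ^+ 2 * hnorm y ^+ 2.
  apply: sqr_le_of_quadratic_ge0; first exact: sqr_ge0.
  by move=> t; rewrite -hnorm_sqrDZ sqr_ge0.
apply: le_trans (ler_norm _) _.
rewrite -ler_sqr ?nnegrE ?mulr_ge0 ?hnorm_ge0 //.
by rewrite real_normK ?num_real // exprMn.
Qed.

Lemma hnormD x y : hnorm (x + y) <= hnorm x + hnorm y.
Proof.
rewrite -ler_sqr ?nnegrE ?addr_ge0 ?hnorm_ge0 //.
have := hnorm_sqrDZ x y 1; rewrite rmorph1 scale1r => ->.
have := Re_inner_le x y; lra.
Qed.

Lemma hnormZ (t : R) x : hnorm (t%:C *: x) = `|t| * hnorm x.
Proof.
apply/eqP; rewrite -(@eqrXn2 _ 2) ?mulr_ge0 ?hnorm_ge0 //.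
rewrite -[t%:C *: x]add0r hnorm_sqrDZ hnorm0 inner0l /= exprMn.
by rewrite real_normK ?num_real //; apply/eqP; ring.
Qed.

Lemma hnormN x : hnorm (- x) = hnorm x.
Proof.
by rewrite -scaleN1r -(rmorphN1 (real_complex R)) hnormZ normrN1 mul1r.
Qed.

Lemma hnormBC x y : hnorm (x - y) = hnorm (y - x).
Proof. by rewrite -hnormN opprB. Qed.

Lemma hnorm_le_addB x y : hnorm x <= hnorm y + hnorm (x - y).
Proof. by rewrite -[x in hnorm x](subrK y) addrC hnormD. Qed.

Lemma hnorm_sum {I : Type} (r : seq I) (P : pred I) (F : I -> H) :
  hnorm (\sum_(i <- r | P i) F i) <= \sum_(i <- r | P i) hnorm (F i).
Proof.
elim/big_rec2: _ => [|i u v _ uv]; first by rewrite hnorm0.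
by apply: le_trans (hnormD _ _) _; rewrite lerD2l.
Qed.

Definition linear_of {T : H -> H} (T_lin : linear T) : {linear H -> H} :=
  HB.pack T (GRing.isLinear.Build _ _ _ _ T T_lin).

Definition bounded_on_ball (T : H -> H) : Prop :=
  exists M, forall x, hnorm x <= 1 -> hnorm (T x) <= M.

Lemma bounded_linear_on_ball {T} : bounded_linear hs T -> bounded_on_ball T.
Proof.
move=> [_ [M TM]]; exists `|M| => x x_le1; apply: le_trans (TM x) _.
apply: le_trans (ler_wpM2r (hnorm_ge0 x) (ler_norm M)) _.
exact: ler_piMr.
Qed.

Lemma bounded_on_ballB {T U} :
  bounded_on_ball T -> bounded_on_ball U ->
  bounded_on_ball (fun x => T x - U x).
Proof.
move=> [M TM] [N UN]; exists (M + N) => x x_le1.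
apply: le_trans (hnormD _ _) _; rewrite hnormN.
by apply: lerD; [exact: TM | exact: UN].
Qed.

Lemma hnorm_le_opnorm {T x} :
  bounded_on_ball T -> hnorm x <= 1 -> hnorm (T x) <= opnorm T.
Proof.
move=> [M TM] x_le1; apply: ub_le_sup; last by exists x.
by exists M => _ [y y_le1 <-]; apply: TM.
Qed.

Lemma opnorm_le T c :
  (forall x, hnorm x <= 1 -> hnorm (T x) <= c) -> opnorm T <= c.
Proof.
move=> Tc; apply: ge_sup; first by exists (hnorm (T 0)), 0; rewrite //= hnorm0.
by move=> _ [y y_le1 <-]; apply: Tc.
Qed.

Lemma hnorm_le_opnormM (T : {linear H -> H}) x :
  bounded_on_ball T -> hnorm (T x) <= opnorm T * hnorm x.
Proof.
move=> Tb; have [x_eq0|x_neq0] := eqVneq (hnorm x) 0.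
  by rewrite (hnorm_eq0 x_eq0) linear0 hnorm0 mulr0.
have x_gt0 : 0 < hnorm x by rewrite lt_def x_neq0 hnorm_ge0.
have := hnorm_le_opnorm (x := (hnorm x)^-1%:C *: x) Tb.
rewrite linearZZ !hnormZ ger0_norm ?invr_ge0 ?hnorm_ge0 // mulVf // lexx.
by move=> /(_ isT); rewrite mulrC ler_pdivrMr.
Qed.

Lemma opnorm_attained_limit {S : H -> H} {x0 : H} :
  hnorm x0 = 1 -> bounded_on_ball S ->
  (forall e, 0 < e -> exists T, opnorm (fun x => T x - S x) < e /\
     forall x, hnorm x <= 1 -> hnorm (T x) <= hnorm (T x0)) ->
  hnorm (S x0) = opnorm S.
Proof.
move=> x0_1 Sb approx; apply/le_anti/andP; split.
  by apply: hnorm_le_opnorm; rewrite ?x0_1.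
apply/ler_addgt0Pr => e e_gt0.
have [T [TS_lt T_max]] := approx (e / 2) (divr_gt0 e_gt0 (ltr0Sn _ 1)).
have Tb : bounded_on_ball T by exists (hnorm (T x0)).
have TS_le x : hnorm x <= 1 -> hnorm (T x - S x) <= e / 2.
  move=> x_le1; apply/ltW/le_lt_trans/TS_lt.
  exact: hnorm_le_opnorm (bounded_on_ballB Tb Sb) x_le1.
have Tx0_le : hnorm (T x0) <= hnorm (S x0) + e / 2.
  by apply: le_trans (hnorm_le_addB _ (S x0)) _; rewrite lerD2l TS_le ?x0_1.
apply: opnorm_le => x x_le1.
apply: le_trans (hnorm_le_addB _ (T x)) _; rewrite hnormBC.
have := TS_le x x_le1; have := T_max x x_le1; lra.
Qed.

Lemma sesquilinear_diag0 (q : H -> H -> R[i]) :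
  (forall a x y z, q (a *: x + y) z = a * q x z + q y z) ->
  (forall a x y z, q z (a *: x + y) = a^* * q z x + q z y) ->
  (forall x, q x x = 0) -> forall x y, q x y = 0.
Proof.
move=> qDZl qDZr q_diag x y.
have expand a : 0 = a * a^* * q y y + a * q y x + a^* * q x y + q x x.
  by rewrite -(q_diag (a *: y + x)) qDZl !qDZr; ring.
have E1 : q y x + q x y = 0.
  by move: (expand 1); rewrite !q_diag conjC1 => E; rewrite [RHS]E; ring.
have Ei : 'i * q y x - 'i * q x y = 0.
  by move: (expand 'i); rewrite !q_diag conjCi => E; rewrite [RHS]E; ring.
have : 2 * 'i * q x y = 'i * (q y x + q x y) - ('i * q y x - 'i * q x y).
  by ring.
rewrite E1 Ei mulr0 subr0 => /eqP.
have i2_neq0 : 2 * 'i != 0 :> R[i] by rewrite mulf_neq0 ?pnatr_eq0 ?neq0Ci.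
by move=> /eqP E; apply: (mulfI i2_neq0); rewrite E mulr0.
Qed.

Lemma positive_op_selfadjoint {T : {linear H -> H}} :
  positive_op hs T -> forall x y, inner (T x) y = inner x (T y).
Proof.
move=> T_pos x y; apply/subr0_eq.
apply: (sesquilinear_diag0 (fun u v => inner (T u) v - inner u (T v))).
- by move=> a u v w; rewrite linearP !innerDZl; ring.
- by move=> a u v w; rewrite linearP !innerDZr; ring.
- by move=> u; rewrite [inner u (T u)]inner_conj geC0_conj ?subrr.
Qed.

Lemma positive_op_neg_eigen0 {T : {linear H -> H}} {l : R} {z : H} :
  positive_op hs T -> 0 < l -> T z = (- l)%:C *: z -> z = 0.
Proof.
move=> T_pos l_gt0 Tz; apply: (@inner_eq0 _ _ hs); apply/le_anti.
rewrite inner_ge0 andbT; have := T_pos z.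
by rewrite Tz innerZl rmorphN mulNr oppr_ge0 pmulr_rle0 ?ltcR.
Qed.

Lemma selfadjoint_norm_attained_sqr {T : {linear H -> H}} {l : R} {x0 : H} :
  (forall x y, inner (T x) y = inner x (T y)) ->
  (forall x, hnorm (T x) <= l * hnorm x) ->
  hnorm x0 = 1 -> hnorm (T x0) = l -> T (T x0) = (l ^+ 2)%:C *: x0.
Proof.
move=> T_sa T_le x0_1 Tx0_l.
have TTx0_le : hnorm (T (T x0)) <= l ^+ 2 by rewrite expr2 -{2}Tx0_l T_le.
have l_ge0 : 0 <= l by rewrite -Tx0_l hnorm_ge0.
apply/subr0_eq/hnorm_eq0/eqP; rewrite -sqrf_eq0 eq_le sqr_ge0 andbT.
rewrite -scaleNr -rmorphN hnorm_sqrDZ T_sa -hnorm_sqr Tx0_l x0_1.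
have : hnorm (T (T x0)) ^+ 2 <= (l ^+ 2) ^+ 2.
  by rewrite ler_sqr ?nnegrE ?hnorm_ge0 ?exprn_ge0.
lra.
Qed.

Lemma positive_opnorm_eigen (T : {linear H -> H}) x0 :
  bounded_on_ball T -> positive_op hs T -> hnorm x0 = 1 ->
  hnorm (T x0) = opnorm T -> T x0 = (opnorm T)%:C *: x0.
Proof.
move=> Tb T_pos x0_1 Tx0_l; set l := opnorm T in Tx0_l *.
have T_le x : hnorm (T x) <= l * hnorm x := hnorm_le_opnormM T x Tb.
have [l0|l_neq0] := eqVneq l 0.
  by rewrite l0 rmorph0 scale0r; apply: hnorm_eq0; rewrite Tx0_l.
have l_gt0 : 0 < l by rewrite lt_def l_neq0 -Tx0_l hnorm_ge0.
have TTx0 := selfadjoint_norm_attained_sqr (positive_op_selfadjoint T_pos)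
  T_le x0_1 Tx0_l.
apply/subr0_eq/(positive_op_neg_eigen0 T_pos l_gt0).
rewrite linearB linearZZ TTx0 rmorphN scaleNr scalerBr scalerA -rmorphM.
by rewrite -expr2 opprB.
Qed.

Lemma iter_eigen {T : {linear H -> H}} {a x} k :
  T x = a *: x -> iter k T x = a ^+ k *: x.
Proof.
move=> Tx; elim: k => [|k IH]; first by rewrite expr0 scale1r.
by rewrite iterS IH linearZZ Tx scalerA -exprSr.
Qed.

Lemma poly_op_eigen {T : {linear H -> H}} {a x} p :
  T x = a *: x -> poly_op p T x = p.[a] *: x.
Proof.
move=> Tx; rewrite /poly_op horner_coef scaler_suml; apply: eq_bigr => k _.
by rewrite (iter_eigen _ Tx) scalerA.
Qed.

Lemma hnorm_iter_le {T : H -> H} {l : R} x k :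
  0 <= l -> (forall y, hnorm (T y) <= l * hnorm y) ->
  hnorm (iter k T x) <= l ^+ k * hnorm x.
Proof.
move=> l_ge0 T_le; elim: k => [|k IH]; first by rewrite expr0 mul1r.
rewrite iterS exprS -mulrA; apply: le_trans (T_le _) _.
exact: ler_wpM2l.
Qed.

Lemma hnorm_poly_op_le {T : H -> H} {q : {poly R}} {l : R} x :
  (forall k, 0 <= q`_k) -> 0 <= l ->
  (forall y, hnorm (T y) <= l * hnorm y) ->
  hnorm (poly_op (map_poly (real_complex R) q) T x) <= q.[l] * hnorm x.
Proof.
move=> q_ge0 l_ge0 T_le.
rewrite /poly_op size_map_poly horner_coef mulr_suml.
apply: le_trans (hnorm_sum _ _ _) _; apply: ler_sum => k _.
rewrite coef_map hnormZ ger0_norm // -mulrA ler_wpM2l //.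
exact: hnorm_iter_le.
Qed.

Lemma poly_op_norm_attained (T : {linear H -> H})
    {q : {poly R}} {l : R} {x0 : H} :
  (forall k, 0 <= q`_k) -> 0 <= l ->
  (forall y, hnorm (T y) <= l * hnorm y) ->
  hnorm x0 = 1 -> T x0 = l%:C *: x0 ->
  forall x, hnorm x <= 1 ->
  hnorm (poly_op (map_poly (real_complex R) q) T x) <=
  hnorm (poly_op (map_poly (real_complex R) q) T x0).
Proof.
move=> q_ge0 l_ge0 T_le x0_1 Tx0 x x_le1.
have ql_ge0 : 0 <= q.[l].
  by rewrite horner_coef; apply: sumr_ge0 => k _; rewrite mulr_ge0 ?exprn_ge0.
rewrite (poly_op_eigen _ Tx0) horner_map hnormZ x0_1 mulr1 ger0_norm //.
apply: le_trans (hnorm_poly_op_le x q_ge0 l_ge0 T_le) _.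
exact: ler_piMr.
Qed.

End InnerProductSpace.

Lemma nonneg_coef_polyP {R : realType} {p : {poly R[i]}} :
  (forall k, 0 <= p`_k) ->
  exists2 q : {poly R}, p = map_poly (real_complex R) q & forall k, 0 <= q`_k.
Proof.
move=> p_ge0; exists (map_poly (@Re R) p) => [|k]; last first.
  by rewrite coef_map_id0 // -ler0c RRe_real ?ger0_real.
apply/polyP => k; rewrite coef_map coef_map_id0 //.
by rewrite /= RRe_real ?ger0_real.
Qed.

Theorem proposition2p12 (R : realType) (H : lmodType R[i]) (hs : hilbert H)
  (P : H -> H) (p : nat -> {poly R[i]}) (S : H -> H) :
  bounded_linear hs P -> positive_op hs P ->
  (forall (n k : nat), 0 <= (p n)`_k) ->
  bounded_linear hs S ->
  (forall e : R, 0 < e -> exists N : nat, forall n : nat, (N <= n)%N ->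
      opnorm hs (fun x => poly_op (p n) P x - S x) < e) ->
  property_N hs P -> property_N hs S.
Proof.
move=> P_bl P_pos p_ge0 S_bl p_cvg [x0 [x0_1 Px0_opnorm]].
pose P' := linear_of P_bl.1.
have P_ball := bounded_linear_on_ball hs P_bl.
have P_le y : hnorm hs (P y) <= opnorm hs P * hnorm hs y :=
  hnorm_le_opnormM hs P' y P_ball.
have opnormP_ge0 : 0 <= opnorm hs P by rewrite -Px0_opnorm hnorm_ge0.
have Px0 : P x0 = (opnorm hs P)%:C *: x0 :=
  positive_opnorm_eigen hs P' x0 P_ball P_pos x0_1 Px0_opnorm.
exists x0; split => //.
apply: (opnorm_attained_limit hs x0_1 (bounded_linear_on_ball hs S_bl)).
move=> e e_gt0; have [N pN_near] := p_cvg e e_gt0.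
have [q pN_q q_ge0] := nonneg_coef_polyP (p_ge0 N).
exists (poly_op (p N) P); split; first exact: pN_near (leqnn N).
rewrite pN_q.
exact: (poly_op_norm_attained hs P' q_ge0 opnormP_ge0 P_le x0_1 Px0).
Qed.
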